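(* Consider the flat-pricing market described in the context and assume $\eta<\big(\kappa_{\mathrm{avg}}\,\Phi_{\max}^{1-\theta}\big)^{-1}$. Treat $\kappa_{\mathrm{avg}}$ and $\kappa_{\mathrm{peak}}$ as independent variable parameters, with all other parameters fixed. (i) In the opt-saturated case (i.e., when $R'(p_0)<0$), as $\kappa_{\mathrm{peak}}$ decreases, the equilibrium price $p^\star$ decreases, so the net-utility $\Phi^\theta-p^\star$ of every subscriber increases, and the equilibrium revenue $R(p^\star)$ increases (more precisely $\partial p^\star/\partial\kappa_{\mathrm{peak}}>0$ and $\partial R(p^\star)/\partial\kappa_{\mathrm{peak}}<0$); consequently the user surplus and the social welfare increase. (ii) In the opt-unsaturated case (i.e., when $R'(p_0)>0$), as $\kappa_{\mathrm{avg}}$ decreases, the equilibrium price decreases, so the net-utility of every subscriber increases, and the maximal revenue $\max_{p\in\mathcal P}R(p)$ increases; consequently the user surplus and the social welfare increase.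
   Context: Market model (single cell). There are $\hat N$ users (treated as a continuum of mass $\hat N$) in one base-station cell with capacity $C_{3g}>0$ (traffic volume per time slot), and time slots $t\in T=\{1,\dots,|T|\}$. Each user's daily traffic demand $\Phi$ is random with density $f_\Phi(x)=x^{-\sigma}/Z$ for $0\le x\le\Phi_{\max}$, where $0<\sigma<1$ and $Z=\Phi_{\max}^{1-\sigma}/(1-\sigma)$. All users share a temporal preference $w(t)\ge 0$ with $\sum_{t\in T}w(t)=1$; a user with demand $\Phi$ has per-slot demand $\phi(t)=w(t)\Phi$. The willingness to pay is $\gamma(t)=w(t)^{1-\theta}$ with price sensitivity $\theta\in(0,1)$; a user sending volumes $x(t)\le\phi(t)$ and paying $m$ gets net-utility $\sum_{t}\gamma(t)x(t)^\theta-m$. Offloading indicators: constants $\kappa_{\mathrm{avg}},\kappa_{\mathrm{peak}}\in(0,1]$ (independent of price) such that, if $X_{\rm tot}=\sum_t X(t)$ is the total (cellular+WiFi) traffic sent in the cell in a day, then the total daily cellular (3G) traffic is $\kappa_{\mathrm{avg}}X_{\rm tot}$ and the peak per-slot cellular traffic is $\kappa_{\mathrm{peak}}X_{\rm tot}$. Flat pricing with fee $p\ge0$: a user subscribes iff its net-utility $\Phi^\theta-p$ is positive, i.e. iff $\Phi>p^{1/\theta}$, and a subscriber sends its whole demand, $x(t)=\phi(t)$. Let $p_{\max}=\Phi_{\max}^\theta$ (no subscribers for $p\ge p_{\max}$). The provider's revenue (income minus linear cellular cost with coefficient $\eta>0$ per unit of cellular traffic) is, for $0\le p<p_{\max}$,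 $$R(p)=\hat N\int_{p^{1/\theta}}^{\Phi_{\max}}\big(p-\eta\kappa_{\mathrm{avg}}\Phi\big)f_\Phi(\Phi)\,d\Phi,$$ and $R(p)=0$ for $p\ge p_{\max}$. The peak cellular traffic is $A(p)=\kappa_{\mathrm{peak}}\hat N\int_{p^{1/\theta}}^{\Phi_{\max}}\Phi f_\Phi(\Phi)\,d\Phi$. Feasible price set: $\mathcal P=\{p: R(p)>0,\ A(p)\le C_{3g}\}$; threshold price $p_0=\inf\mathcal P$. An equilibrium price is any $p^\star\in\arg\max_{p\in\mathcal P}R(p)$ (it is unique under the stated hypothesis). The network is saturated at $p$ if $A(p)=C_{3g}$; for a unique equilibrium price $p^\star$, the network is called opt-saturated if it is saturated at $p^\star$ and opt-unsaturated otherwise. User surplus is the total net-utility of subscribers; social welfare is user surplus plus provider revenue. *)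

From Stdlib Require Import Reals Lra ClassicalEpsilon.
Open Scope R_scope.

(* Real power with the convention 0 at non-positive bases
   (Stdlib's Rpower 0 y = 1, which is wrong for p^(1/theta) at p = 0). *)
Definition rpow (x y : R) : R := if Rlt_dec 0 x then Rpower x y else 0.

(* Riemann integral of f over [a,b] (chosen value; meaningful when f is
   Riemann integrable on [a,b]). *)
Definition integral (f : R -> R) (a b : R) : R :=
  epsilon (inhabits 0) (fun v => exists pr : Riemann_integrable f a b, RiemannInt pr = v).

(* Fixed market parameters (everything except kappa_avg, kappa_peak). *)
Record market := Market {
  Nhat : R;      (* mass of users *)
  C3g : R;       (* cellular capacity per slot *)
  Phimax : R;    (* maximal daily demand *)
  sigma : R;     (* demand density exponent *)
  theta : R;     (* price sensitivity *)
  eta : R        (* cellular cost coefficient *)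
}.

Definition valid_market (M : market) : Prop :=
  0 < Nhat M /\ 0 < C3g M /\ 0 < Phimax M /\
  0 < sigma M < 1 /\ 0 < theta M < 1 /\ 0 < eta M.

Definition Zc (M : market) : R := rpow (Phimax M) (1 - sigma M) / (1 - sigma M).
Definition dens (M : market) (x : R) : R := rpow x (- sigma M) / Zc M.

Definition pmax (M : market) : R := rpow (Phimax M) (theta M).

Definition thr (M : market) (p : R) : R := rpow p (1 / theta M).

Definition Rev (M : market) (ka p : R) : R :=
  if Rlt_dec p (pmax M) then
    Nhat M * integral (fun x => (p - eta M * ka * x) * dens M x) (thr M p) (Phimax M)
  else 0.

Definition Apeak (M : market) (kp p : R) : R :=
  if Rlt_dec p (pmax M) then
    kp * Nhat M * integral (fun x => x * dens M x) (thr M p) (Phimax M)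
  else 0.

Definition feasible (M : market) (ka kp p : R) : Prop :=
  0 <= p /\ 0 < Rev M ka p /\ Apeak M kp p <= C3g M.

Definition is_inf (E : R -> Prop) (x : R) : Prop :=
  (forall y, E y -> x <= y) /\ (forall z, (forall y, E y -> z <= y) -> z <= x).

Definition is_eq_price (M : market) (ka kp p : R) : Prop :=
  feasible M ka kp p /\ (forall q, feasible M ka kp q -> Rev M ka q <= Rev M ka p).

Definition pstar (M : market) (ka kp : R) : R :=
  epsilon (inhabits 0) (is_eq_price M ka kp).

(* Net-utility of a user with daily demand Phi under flat fee p:
   sum_t gamma(t) phi(t)^theta - p = Phi^theta - p. *)
Definition net_utility (M : market) (Phi p : R) : R := rpow Phi (theta M) - p.

Definition surplus (M : market) (p : R) : R :=
  if Rlt_dec p (pmax M) then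
    Nhat M * integral (fun x => net_utility M x p * dens M x) (thr M p) (Phimax M)
  else 0.

Definition welfare (M : market) (ka p : R) : R := surplus M p + Rev M ka p.

Definition Rprime_at_p0 (M : market) (ka kp : R) (s : R -> Prop) : Prop :=
  exists p0 d, is_inf (feasible M ka kp) p0 /\
    derivable_pt_lim (Rev M ka) p0 d /\ s d.

From Pilot Require Import Defs.
From Stdlib Require Import Reals Lra ClassicalEpsilon Ranalysis5.
From Coquelicot Require Import Coquelicot.
(* Re-imported so that [sigma] denotes the market parameter rather than
   Stdlib's finite sums. *)
Import Defs.
Open Scope R_scope.

(* Every quantity of the flat-pricing model is rewritten in
   terms of the subscription threshold [t = p^(1/theta)], an increasing
   bijection between prices in (0, pmax) and thresholds in (0, Phimax).  The
   integrals against the density [x^(-sigma)/Z] have closed forms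
   ([integral_tail]), giving revenue [rev_t k t], peak traffic [peak_t k t]
   (decreasing in t) and user surplus [surplus_t t].  The key computation is
   [rev_t_deriv]: d/dt rev_t k t = scale * eta * t^(1-sigma) * (k - kcrit t),
   where [kcrit] is unimodal with peak [t_peak], and the hypothesis on [eta]
   says [kappa_avg < kcrit Phimax].  Hence the sign of R'(p0) decides the
   regime: if R'(p0) < 0 the capacity binds at p0 and the equilibrium
   threshold is [t_sat kappa_peak], the explicit solution of
   [peak_t kappa_peak t = C3g]; if R'(p0) > 0 the equilibrium threshold is
   [t_opt kappa_avg], the inverse of [kcrit] on its increasing branch.  In both
   cases the equilibrium threshold increases with the varied parameter, and
   [comparative_statics] turns this, together with the sign of the revenue
   derivative along the path (chain rule, resp. the envelope theorem
   [rev_t_envelope]), into the signs claimed by the theorem. *)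

Lemma rpow_pos_base x c : 0 < x -> rpow x c = Rpower x c.
Proof. intros hx; unfold rpow; destruct (Rlt_dec 0 x); [reflexivity | lra]. Qed.

Lemma Rpower_pos x c : 0 < Rpower x c.
Proof. apply exp_pos. Qed.

Lemma Rpower_exp_eq x a b : a = b -> Rpower x a = Rpower x b.
Proof. intros ->; reflexivity. Qed.

Lemma Rpower_split x e a b : e = a + b -> Rpower x e = Rpower x a * Rpower x b.
Proof. intros ->; apply Rpower_plus. Qed.

Lemma Rpower_m1 t : 0 < t -> Rpower t (-1) = / t.
Proof.
  intros h. replace (-1) with (- (1)) by ring.
  rewrite Rpower_Ropp, Rpower_1 by exact h. reflexivity.
Qed.

Lemma Rpower_root x c : 0 < x -> c <> 0 -> Rpower (Rpower x (1 / c)) c = x.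
Proof.
  intros hx hc. rewrite Rpower_mult, (Rpower_exp_eq x _ 1) by (field; exact hc).
  apply Rpower_1, hx.
Qed.

Lemma Rpower_unroot x c : 0 < x -> c <> 0 -> Rpower (Rpower x c) (1 / c) = x.
Proof.
  intros hx hc. rewrite Rpower_mult, (Rpower_exp_eq x _ 1) by (field; exact hc).
  apply Rpower_1, hx.
Qed.

Lemma Derive_Rpower x c : 0 < x -> Derive (fun y => Rpower y c) x = c * Rpower x (c - 1).
Proof. intros hx. apply is_derive_unique, is_derive_Reals, derivable_pt_lim_power, hx. Qed.

Lemma ex_derive_Rpower x c : 0 < x -> ex_derive (fun y => Rpower y c) x.
Proof.
  intros hx. exists (c * Rpower x (c - 1)).
  apply is_derive_Reals, derivable_pt_lim_power, hx.
Qed.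

Lemma rpow_continuity_at_0 a : 0 < a -> continuity_pt (fun y => rpow y a) 0.
Proof.
  intros ha eps heps.
  exists (Rpower eps (1 / a)). split; [apply Rpower_pos |].
  intros y [_ hy]. simpl in *. unfold R_dist in *. rewrite Rminus_0_r in hy.
  unfold rpow at 2. destruct (Rlt_dec 0 0) as [h0 | _]; [lra |].
  rewrite Rminus_0_r. unfold rpow. destruct (Rlt_dec 0 y) as [hy0 | hy0].
  - rewrite Rabs_right in hy |- * by (lra || (left; apply Rpower_pos)).
    rewrite <- (Rpower_root eps a heps) by lra. apply Rlt_Rpower_l; [lra | split; lra].
  - rewrite Rabs_R0. exact heps.
Qed.

Lemma derivable_pt_lim_local (f g : R -> R) x l r : 0 < r ->
  (forall y, Rabs (y - x) < r -> f y = g y) ->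
  derivable_pt_lim g x l -> derivable_pt_lim f x l.
Proof.
  intros hr he hg eps heps. destruct (hg eps heps) as [d hd].
  exists (mkposreal (Rmin d r) (Rmin_pos _ _ (cond_pos d) hr)). simpl. intros h hh0 hh.
  rewrite (he (x + h)), (he x).
  - apply hd; auto. apply Rlt_le_trans with (1 := hh), Rmin_l.
  - rewrite Rminus_eq_0, Rabs_R0; lra.
  - replace (x + h - x) with h by ring. apply Rlt_le_trans with (1 := hh), Rmin_r.
Qed.

Lemma derivable_pt_lim_rpow x c : 0 < x ->
  derivable_pt_lim (fun y => rpow y c) x (c * Rpower x (c - 1)).
Proof.
  intros hx. apply derivable_pt_lim_local with (g := fun y => Rpower y c) (r := x); auto.
  - intros y hy. apply rpow_pos_base. apply Rabs_def2 in hy. lra.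
  - apply derivable_pt_lim_power, hx.
Qed.

Lemma rpow_continuity a x : 0 < a -> 0 <= x -> continuity_pt (fun y => rpow y a) x.
Proof.
  intros ha [hx | <-]; [| apply rpow_continuity_at_0, ha].
  apply derivable_continuous_pt. exists (a * Rpower x (a - 1)).
  apply derivable_pt_lim_rpow, hx.
Qed.

Lemma continuity_pt_of_ex_derive (f g : R -> R) x : 0 < x ->
  (forall y, 0 < y -> f y = g y) -> ex_derive g x -> continuity_pt f x.
Proof.
  intros hx he [l hl]. apply is_derive_Reals in hl.
  apply derivable_continuous_pt. exists l.
  apply derivable_pt_lim_local with (g := g) (r := x); auto.
  intros y hy. apply he. apply Rabs_def2 in hy. lra.
Qed.

Lemma derivable_pt_lim_gt_near f x l c : derivable_pt_lim f x l -> c < f x ->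
  exists del, 0 < del /\ forall y, Rabs (y - x) < del -> c < f y.
Proof.
  intros hd hc.
  destruct (derivable_continuous_pt f x (exist _ l hd) (f x - c) ltac:(lra)) as [del [hdel h]].
  exists del; split; auto. intros y hy. destruct (Req_dec y x) as [-> | hne]; [lra |].
  assert (hfy : R_dist (f y) (f x) < f x - c).
  { apply h. split; [split; [exact I | auto] | exact hy]. }
  unfold R_dist in hfy. apply Rabs_def2 in hfy. lra.
Qed.

Lemma derivable_pt_lim_lt_near f x l c : derivable_pt_lim f x l -> f x < c ->
  exists del, 0 < del /\ forall y, Rabs (y - x) < del -> f y < c.
Proof.
  intros hd hc.
  destruct (derivable_pt_lim_gt_near (opp_fct f) x (- l) (- c)) as [del [hdel h]].
  - apply derivable_pt_lim_opp, hd.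
  - unfold opp_fct. lra.
  - exists del. split; auto. intros y hy. specialize (h y hy). unfold opp_fct in h. lra.
Qed.

Lemma integral_RiemannInt f a b (pr : Riemann_integrable f a b) :
  integral f a b = RiemannInt pr.
Proof.
  unfold integral.
  destruct (epsilon_spec (inhabits 0)
    (fun v => exists pr : Riemann_integrable f a b, RiemannInt pr = v)) as [pr' H].
  { exists (RiemannInt pr), pr; reflexivity. }
  rewrite <- H. apply RiemannInt_P5.
Qed.

Lemma integral_FTC f G a b : a <= b ->
  (forall x, a <= x <= b -> derivable_pt_lim G x (f x)) ->
  (forall x, a <= x <= b -> continuity_pt f x) ->
  integral f a b = G b - G a.
Proof.
  intros hab hd hc.
  rewrite (integral_RiemannInt f a b (continuity_implies_RiemannInt hab hc)), <- RInt_Reals.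
  apply (@is_RInt_unique R_CompleteNormedModule).
  apply (@is_RInt_derive R_CompleteNormedModule G f).
  - intros x hx. apply is_derive_Reals, hd.
    rewrite Rmin_left, Rmax_right in hx; auto.
  - intros x hx. apply continuity_pt_filterlim, hc.
    rewrite Rmin_left, Rmax_right in hx; auto.
Qed.

Lemma integral_nonpos f a b : a <= b ->
  (forall x, a <= x <= b -> continuity_pt f x) ->
  (forall x, a < x < b -> f x <= 0) -> integral f a b <= 0.
Proof.
  intros hab hc hf.
  rewrite (integral_RiemannInt f a b (continuity_implies_RiemannInt hab hc)).
  pose proof (continuity_implies_RiemannInt hab
    (fun x _ => continuity_pt_const (fun _ => 0) x (fun _ _ => eq_refl))) as pr0.
  apply Rle_trans with (RiemannInt pr0).
  - apply RiemannInt_P19; auto.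
  - destruct (RiemannInt_const_bound (l := 0) (u := 0) pr0 hab) as [_ hu]; [intros; lra | lra].
Qed.

Lemma is_inf_approx (E : R -> Prop) p0 : is_inf E p0 ->
  forall eps, 0 < eps -> exists q, E q /\ q < p0 + eps.
Proof.
  intros [_ hg] eps he. apply NNPP. intros hn.
  assert (p0 + eps <= p0); [| lra].
  apply hg. intros y hy. apply Rnot_lt_le. intros hlt. apply hn. exists y; auto.
Qed.

Lemma unique_eq_price M k kp p1 : feasible M k kp p1 ->
  (forall q, feasible M k kp q -> q <> p1 -> Rev M k q < Rev M k p1) ->
  (forall q, is_eq_price M k kp q <-> q = p1) /\ pstar M k kp = p1.
Proof.
  intros hf hm.
  assert (hiff : forall q, is_eq_price M k kp q <-> q = p1).
  { intros q. split.
    - intros [hq hmax]. destruct (Req_dec q p1) as [| hne]; auto.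
      pose proof (hm q hq hne). pose proof (hmax p1 hf). lra.
    - intros ->. split; auto. intros q hq.
      destruct (Req_dec q p1) as [-> | hne]; [lra | left; apply hm; auto]. }
  split; auto. apply hiff. unfold pstar.
  apply (epsilon_spec (inhabits 0) (is_eq_price M k kp)). exists p1. apply hiff; reflexivity.
Qed.

Section Market.

Variable M : market.
Hypothesis hv : valid_market M.

Let Nhat_pos : 0 < Nhat M := proj1 hv.
Let C3g_pos : 0 < C3g M := proj1 (proj2 hv).
Let Phimax_pos : 0 < Phimax M := proj1 (proj2 (proj2 hv)).
Let sigma_range : 0 < sigma M < 1 := proj1 (proj2 (proj2 (proj2 hv))).
Let theta_range : 0 < theta M < 1 := proj1 (proj2 (proj2 (proj2 (proj2 hv)))).
Let eta_pos : 0 < eta M := proj2 (proj2 (proj2 (proj2 (proj2 hv)))).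

Lemma Zc_eq : Zc M = Rpower (Phimax M) (1 - sigma M) / (1 - sigma M).
Proof. unfold Zc. rewrite rpow_pos_base; auto. Qed.

Lemma Zc_pos : 0 < Zc M.
Proof. rewrite Zc_eq. apply Rdiv_lt_0_compat; [apply Rpower_pos | lra]. Qed.

Lemma pmax_eq : pmax M = Rpower (Phimax M) (theta M).
Proof. unfold pmax. apply rpow_pos_base, Phimax_pos. Qed.

(** With [t = p^(1/theta)] the subscription threshold, the three
    integrals of the model are combinations of the tail integrals below
    (each is [int_t^Phimax x^(e-1) dx] for the appropriate [e]). *)

Definition tail_users t :=
  (Rpower (Phimax M) (1 - sigma M) - Rpower t (1 - sigma M)) / (1 - sigma M).
Definition tail_traffic t :=
  (Rpower (Phimax M) (2 - sigma M) - Rpower t (2 - sigma M)) / (2 - sigma M).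
Definition tail_utility t :=
  (Rpower (Phimax M) (1 + theta M - sigma M) - Rpower t (1 + theta M - sigma M))
  / (1 + theta M - sigma M).

Lemma integral_tail f a b c t : 0 < t <= Phimax M ->
  (forall x, 0 < x -> f x = (a + b * x + c * Rpower x (theta M)) * Rpower x (- sigma M) / Zc M) ->
  integral f t (Phimax M) = (a * tail_users t + b * tail_traffic t + c * tail_utility t) / Zc M.
Proof.
  intros hti hf. pose proof Zc_pos as hZ.
  set (G x := (a * (Rpower x (1 - sigma M) / (1 - sigma M))
             + b * (Rpower x (2 - sigma M) / (2 - sigma M))
             + c * (Rpower x (1 + theta M - sigma M) / (1 + theta M - sigma M))) / Zc M).
  set (g x := (a + b * x + c * Rpower x (theta M)) * Rpower x (- sigma M) / Zc M).
  rewrite (integral_FTC f G t (Phimax M)).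
  - unfold G, tail_users, tail_traffic, tail_utility. field. repeat split; lra.
  - lra.
  - intros x hx. rewrite hf by lra. apply is_derive_Reals. unfold G. auto_derive.
    + repeat split; apply ex_derive_Rpower; lra.
    + rewrite !Derive_Rpower by lra.
      rewrite (Rpower_exp_eq x (1 - sigma M - 1) (- sigma M)) by ring.
      rewrite (Rpower_split x (2 - sigma M - 1) 1 (- sigma M)) by ring.
      rewrite (Rpower_split x (1 + theta M - sigma M - 1) (theta M) (- sigma M)) by ring.
      rewrite Rpower_1 by lra. field. repeat split; lra.
  - intros x hx. apply continuity_pt_of_ex_derive with (g := g); [lra | exact hf |].
    unfold g. auto_derive. repeat split; apply ex_derive_Rpower; lra.
Qed.

Lemma thr_eq p : 0 < p -> thr M p = Rpower p (1 / theta M).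
Proof. intros hp. apply rpow_pos_base, hp. Qed.

Lemma thr_pos p : 0 < p -> 0 < thr M p.
Proof. intros hp. rewrite thr_eq by exact hp. apply Rpower_pos. Qed.

Lemma thr_pow p : 0 < p -> Rpower (thr M p) (theta M) = p.
Proof. intros hp. rewrite thr_eq by exact hp. apply Rpower_root; lra. Qed.

Lemma thr_of_pow t : 0 < t -> thr M (Rpower t (theta M)) = t.
Proof. intros h. rewrite thr_eq by apply Rpower_pos. apply Rpower_unroot; lra. Qed.

Lemma thr_lt a b : 0 < a -> a < b -> thr M a < thr M b.
Proof.
  intros ha hab. rewrite !thr_eq by lra.
  apply Rlt_Rpower_l; [apply Rdiv_lt_0_compat |]; lra.
Qed.

Lemma pow_lt t s : 0 < t -> t < s -> Rpower t (theta M) < Rpower s (theta M).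
Proof. intros. apply Rlt_Rpower_l; lra. Qed.

Lemma price_threshold p : 0 < p < pmax M ->
  0 < thr M p < Phimax M /\ p = Rpower (thr M p) (theta M).
Proof.
  intros hp. rewrite thr_pow by lra. split; [split; [apply thr_pos; lra |] | reflexivity].
  rewrite <- (thr_of_pow (Phimax M)), <- pmax_eq by exact Phimax_pos. apply thr_lt; lra.
Qed.

Lemma threshold_price t : 0 < t < Phimax M -> 0 < Rpower t (theta M) < pmax M.
Proof. intros h. rewrite pmax_eq. split; [apply Rpower_pos | apply pow_lt; lra]. Qed.

Definition scale := Nhat M / Zc M.
Definition rev_t k t := scale * (Rpower t (theta M) * tail_users t - eta M * k * tail_traffic t).
Definition peak_t k t := k * scale * tail_traffic t.
Definition surplus_t t := scale * (tail_utility t - Rpower t (theta M) * tail_users t).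

(* [scale = Nhat / Z] converts normalised integrals into totals over all users. *)
Lemma scale_pos : 0 < scale.
Proof. apply Rdiv_lt_0_compat; [exact Nhat_pos | apply Zc_pos]. Qed.

Lemma dens_eq x : 0 < x -> dens M x = Rpower x (- sigma M) / Zc M.
Proof. intros hx. unfold dens. rewrite rpow_pos_base; auto. Qed.

Lemma Rev_pow k t : 0 < t < Phimax M -> Rev M k (Rpower t (theta M)) = rev_t k t.
Proof.
  intros hti. pose proof (threshold_price t hti) as hp. pose proof Zc_pos.
  unfold Rev. destruct (Rlt_dec _ (pmax M)) as [_ | hn]; [| lra].
  rewrite thr_of_pow, (integral_tail _ (Rpower t (theta M)) (- eta M * k) 0); try lra.
  - unfold rev_t, scale. field. lra.
  - intros x hx. rewrite dens_eq by exact hx. field. lra.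
Qed.

Lemma Apeak_pow k t : 0 < t < Phimax M -> Apeak M k (Rpower t (theta M)) = peak_t k t.
Proof.
  intros hti. pose proof (threshold_price t hti) as hp. pose proof Zc_pos.
  unfold Apeak. destruct (Rlt_dec _ (pmax M)) as [_ | hn]; [| lra].
  rewrite thr_of_pow, (integral_tail _ 0 1 0); try lra.
  - unfold peak_t, scale. field. lra.
  - intros x hx. rewrite dens_eq by exact hx. field. lra.
Qed.

Lemma surplus_pow t : 0 < t < Phimax M -> surplus M (Rpower t (theta M)) = surplus_t t.
Proof.
  intros hti. pose proof (threshold_price t hti) as hp. pose proof Zc_pos.
  unfold surplus. destruct (Rlt_dec _ (pmax M)) as [_ | hn]; [| lra].
  rewrite thr_of_pow, (integral_tail _ (- Rpower t (theta M)) 0 1); try lra.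
  - unfold surplus_t, scale. field. lra.
  - intros x hx. unfold net_utility. rewrite dens_eq, rpow_pos_base by exact hx. field. lra.
Qed.

(* At price [0] everybody subscribes and the provider only pays costs. *)
Lemma Rev_at_zero k : 0 <= k -> Rev M k 0 <= 0.
Proof.
  intros hk. pose proof Zc_pos as hZ. unfold Rev.
  destruct (Rlt_dec 0 (pmax M)) as [_ | _]; [| lra].
  assert (hthr0 : thr M 0 = 0) by (unfold thr, rpow; destruct (Rlt_dec 0 0); lra).
  set (c := eta M * k / Zc M).
  assert (hc : 0 <= c) by (unfold c; apply Rmult_le_pos; [nra | left; apply Rinv_0_lt_compat; lra]).
  assert (hf : forall x, (0 - eta M * k * x) * dens M x = - c * rpow x (1 - sigma M)).
  { intros x. unfold dens, rpow, c. destruct (Rlt_dec 0 x) as [hx | hx].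
    - rewrite (Rpower_split x (1 - sigma M) 1 (- sigma M)), Rpower_1 by (lra || ring).
      field. lra.
    - unfold Rdiv. ring. }
  assert (hint : integral (fun x => (0 - eta M * k * x) * dens M x) 0 (Phimax M) <= 0).
  { apply integral_nonpos; [lra | |].
    - intros x hx. apply continuity_pt_locally_ext with (a := 1) (f := fun y => - c * rpow y (1 - sigma M)).
      + lra.
      + intros y _. symmetry. apply hf.
      + apply (continuity_pt_scal (fun y => rpow y (1 - sigma M))), rpow_continuity; lra.
    - intros x hx. rewrite hf, rpow_pos_base by lra. pose proof (Rpower_pos x (1 - sigma M)). nra. }
  rewrite hthr0. nra.
Qed.

(** The critical cost level.  [rev_t k] has derivative
    [scale * eta * t^(1-sigma) * (k - kcrit t)], so revenue increases in the
    threshold exactly where [kcrit t < k]; [kcrit] is unimodal with peak [t_peak]. *)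

Definition crit_coef := 1 / (1 - sigma M) + 1 / theta M.
Definition kcrit t :=
  theta M / eta M * (crit_coef * Rpower t (theta M - 1) - Zc M * Rpower t (sigma M + theta M - 2)).
Definition t_peak :=
  Rpower (Zc M * (2 - sigma M - theta M) / (crit_coef * (1 - theta M))) (1 / (1 - sigma M)).

Lemma crit_coef_pos : 0 < crit_coef.
Proof.
  unfold crit_coef.
  assert (0 < 1 / (1 - sigma M)) by (apply Rdiv_lt_0_compat; lra).
  assert (0 < 1 / theta M) by (apply Rdiv_lt_0_compat; lra). lra.
Qed.

Lemma rev_t_deriv k t : 0 < t ->
  derivable_pt_lim (rev_t k) t (scale * eta M * Rpower t (1 - sigma M) * (k - kcrit t)).
Proof.
  intros h0. apply is_derive_Reals. unfold rev_t, kcrit, crit_coef, tail_users, tail_traffic.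
  rewrite Zc_eq. auto_derive.
  - repeat split; apply ex_derive_Rpower; lra.
  - rewrite !Derive_Rpower by lra.
    rewrite (Rpower_split t (theta M) (theta M - 1) 1) by ring.
    rewrite (Rpower_split t (1 - sigma M - 1) (1 - sigma M) (-1)) by ring.
    rewrite (Rpower_exp_eq t (2 - sigma M - 1) (1 - sigma M)) by ring.
    rewrite (Rpower_split t (sigma M + theta M - 2) (theta M - 1) (- (1 - sigma M))) by ring.
    rewrite Rpower_m1, Rpower_Ropp, Rpower_1 by exact h0.
    pose proof (Rpower_pos t (1 - sigma M)). field. repeat split; lra.
Qed.

(* [kcrit'], factored so that its sign is visible. *)
Definition dkcrit t := theta M / eta M * crit_coef * (1 - theta M)
  * Rpower t (sigma M + theta M - 3) * (Rpower t_peak (1 - sigma M) - Rpower t (1 - sigma M)).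

Lemma kcrit_deriv t : 0 < t -> derivable_pt_lim kcrit t (dkcrit t).
Proof.
  intros h0. pose proof crit_coef_pos. pose proof Zc_pos.
  unfold dkcrit, t_peak. rewrite Rpower_root.
  - apply is_derive_Reals. unfold kcrit. auto_derive.
    + repeat split; apply ex_derive_Rpower; lra.
    + rewrite !Derive_Rpower by lra.
      rewrite (Rpower_split t (theta M - 1 - 1) (sigma M + theta M - 3) (1 - sigma M)) by ring.
      rewrite (Rpower_exp_eq t (sigma M + theta M - 2 - 1) (sigma M + theta M - 3)) by ring.
      field. repeat split; lra.
  - apply Rdiv_lt_0_compat; apply Rmult_lt_0_compat; lra.
  - lra.
Qed.

Lemma t_peak_pos : 0 < t_peak.
Proof. apply Rpower_pos. Qed.

Lemma dkcrit_sign t : 0 < t ->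
  exists P, 0 < P /\ dkcrit t = P * (Rpower t_peak (1 - sigma M) - Rpower t (1 - sigma M)).
Proof.
  intros h0. pose proof crit_coef_pos. pose proof (Rpower_pos t (sigma M + theta M - 3)).
  eexists. split; [| reflexivity].
  unfold Rdiv. repeat apply Rmult_lt_0_compat; try apply Rinv_0_lt_compat; lra.
Qed.

Lemma dkcrit_pos t : 0 < t -> t < t_peak -> 0 < dkcrit t.
Proof.
  intros h0 h1. destruct (dkcrit_sign t h0) as [P [hP ->]].
  assert (Rpower t (1 - sigma M) < Rpower t_peak (1 - sigma M)) by (apply Rlt_Rpower_l; lra).
  apply Rmult_lt_0_compat; lra.
Qed.

Lemma dkcrit_neg t : t_peak < t -> dkcrit t < 0.
Proof.
  intros h1. pose proof t_peak_pos. destruct (dkcrit_sign t ltac:(lra)) as [P [hP ->]].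
  assert (Rpower t_peak (1 - sigma M) < Rpower t (1 - sigma M)) by (apply Rlt_Rpower_l; lra).
  nra.
Qed.

Lemma kcrit_increasing a b : 0 < a -> a < b -> b <= t_peak -> kcrit a < kcrit b.
Proof.
  intros ha hab hb.
  destruct (MVT_cor2 kcrit dkcrit a b hab) as [c [hc1 hc2]].
  - intros c hc. apply kcrit_deriv. lra.
  - pose proof (dkcrit_pos c ltac:(lra) ltac:(lra)). nra.
Qed.

Lemma kcrit_decreasing a b : t_peak <= a -> a < b -> kcrit b < kcrit a.
Proof.
  intros ha hab. pose proof t_peak_pos.
  destruct (MVT_cor2 kcrit dkcrit a b hab) as [c [hc1 hc2]].
  - intros c hc. apply kcrit_deriv. lra.
  - pose proof (dkcrit_neg c ltac:(lra)). nra.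
Qed.

Lemma kcrit_stays_above k t1 c : 0 < t1 -> t1 < c -> c <= Phimax M ->
  k <= kcrit t1 -> k < kcrit (Phimax M) -> k < kcrit c.
Proof.
  intros h1 h2 h3 h4 h5. destruct (Rle_dec c t_peak) as [hc | hc].
  - pose proof (kcrit_increasing t1 c h1 h2 hc). lra.
  - destruct (Req_dec c (Phimax M)) as [-> | hne]; auto.
    pose proof (kcrit_decreasing c (Phimax M) ltac:(lra) ltac:(lra)). lra.
Qed.

Lemma kcrit_Phimax_gt k : 0 < k ->
  eta M < / (k * rpow (Phimax M) (1 - theta M)) -> k < kcrit (Phimax M).
Proof.
  intros hk h. rewrite rpow_pos_base in h by exact Phimax_pos.
  assert (hval : kcrit (Phimax M) = / (eta M * Rpower (Phimax M) (1 - theta M))).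
  { unfold kcrit, crit_coef. rewrite Zc_eq.
    rewrite (Rpower_exp_eq (Phimax M) (1 - theta M) (- (theta M - 1))), Rpower_Ropp by ring.
    rewrite (Rpower_split (Phimax M) (theta M - 1) (1 - sigma M) (sigma M + theta M - 2)) by ring.
    pose proof (Rpower_pos (Phimax M) (1 - sigma M)).
    pose proof (Rpower_pos (Phimax M) (sigma M + theta M - 2)).
    field. repeat split; lra. }
  rewrite hval. set (X := Rpower (Phimax M) (1 - theta M)).
  assert (hX : 0 < X) by apply Rpower_pos.
  assert (hkX : eta M * (k * X) < 1).
  { apply Rmult_lt_compat_r with (r := k * X) in h; [| nra]. rewrite Rinv_l in h by nra. lra. }
  apply Rmult_lt_reg_r with (eta M * X); [nra |]. rewrite Rinv_l by nra. nra.
Qed.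

Lemma rev_t_mvt k a b : 0 < a -> a < b ->
  exists c Q, a < c < b /\ 0 < Q /\ rev_t k b - rev_t k a = Q * (k - kcrit c).
Proof.
  intros ha hab.
  destruct (MVT_cor2 (rev_t k) (fun t => scale * eta M * Rpower t (1 - sigma M) * (k - kcrit t)) a b hab)
    as [c [hd hcab]].
  - intros c hc. apply rev_t_deriv. lra.
  - exists c, (scale * eta M * Rpower c (1 - sigma M) * (b - a)). split; [exact hcab |].
    split; [| rewrite hd; ring].
    pose proof scale_pos. pose proof (Rpower_pos c (1 - sigma M)).
    apply Rmult_lt_0_compat; [apply Rmult_lt_0_compat; [apply Rmult_lt_0_compat |] |]; lra.
Qed.

Lemma rev_t_increasing k a b : 0 < a -> a < b ->
  (forall c, a < c < b -> kcrit c < k) -> rev_t k a < rev_t k b.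
Proof.
  intros ha hab hc. destruct (rev_t_mvt k a b ha hab) as [c [Q [hcab [hQ hd]]]].
  pose proof (hc c hcab). nra.
Qed.

Lemma rev_t_decreasing k a b : 0 < a -> a < b ->
  (forall c, a < c < b -> k < kcrit c) -> rev_t k b < rev_t k a.
Proof.
  intros ha hab hc. destruct (rev_t_mvt k a b ha hab) as [c [Q [hcab [hQ hd]]]].
  pose proof (hc c hcab). nra.
Qed.

Lemma tail_traffic_deriv t : 0 < t ->
  derivable_pt_lim tail_traffic t (- Rpower t (1 - sigma M)).
Proof.
  intros h0. apply is_derive_Reals. unfold tail_traffic. auto_derive.
  - apply ex_derive_Rpower, h0.
  - rewrite Derive_Rpower, (Rpower_exp_eq t (2 - sigma M - 1) (1 - sigma M)) by (lra || ring).
    field. lra.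
Qed.

Lemma tail_traffic_decreasing a b : 0 < a < b -> tail_traffic b < tail_traffic a.
Proof.
  intros h. unfold tail_traffic. unfold Rdiv. apply Rmult_lt_compat_r.
  - apply Rinv_0_lt_compat. lra.
  - pose proof (Rlt_Rpower_l a b (2 - sigma M) ltac:(lra) h). lra.
Qed.

Lemma tail_traffic_pos t : 0 < t < Phimax M -> 0 < tail_traffic t.
Proof.
  intros h. pose proof (Rlt_Rpower_l t (Phimax M) (2 - sigma M) ltac:(lra) h).
  unfold tail_traffic. apply Rdiv_lt_0_compat; lra.
Qed.

Lemma tail_users_pos t : 0 < t < Phimax M -> 0 < tail_users t.
Proof.
  intros h. pose proof (Rlt_Rpower_l t (Phimax M) (1 - sigma M) ltac:(lra) h).
  unfold tail_users. apply Rdiv_lt_0_compat; lra.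
Qed.

Lemma peak_t_decreasing k a b : 0 < k -> 0 < a < b -> peak_t k b < peak_t k a.
Proof.
  intros hk h. pose proof (tail_traffic_decreasing a b h). pose proof scale_pos.
  unfold peak_t. apply Rmult_lt_compat_l; nra.
Qed.

Lemma peak_t_deriv k t : 0 < t ->
  derivable_pt_lim (peak_t k) t (- k * scale * Rpower t (1 - sigma M)).
Proof.
  intros h0. replace (- k * scale * Rpower t (1 - sigma M))
    with (k * scale * (- Rpower t (1 - sigma M))) by ring.
  apply (derivable_pt_lim_scal tail_traffic), tail_traffic_deriv, h0.
Qed.

Lemma surplus_t_deriv t : 0 < t ->
  derivable_pt_lim surplus_t t (- scale * theta M * Rpower t (theta M - 1) * tail_users t).
Proof.
  intros h0. apply is_derive_Reals. unfold surplus_t, tail_users, tail_utility. auto_derive.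
  - repeat split; apply ex_derive_Rpower; lra.
  - rewrite !Derive_Rpower by lra.
    rewrite (Rpower_split t (theta M) (theta M - 1) 1) by ring.
    rewrite (Rpower_split t (1 - sigma M - 1) (1 - sigma M) (-1)) by ring.
    rewrite (Rpower_split t (1 + theta M - sigma M - 1) (1 - sigma M) (theta M - 1)) by ring.
    rewrite Rpower_m1, Rpower_1 by exact h0. field. repeat split; lra.
Qed.

Definition dthr p := 1 / theta M * Rpower p (1 / theta M - 1).

Lemma dthr_pos p : 0 < dthr p.
Proof. unfold dthr. apply Rmult_lt_0_compat; [apply Rdiv_lt_0_compat; lra | apply Rpower_pos]. Qed.

Lemma Rev_on_prices k p : 0 < p < pmax M -> Rev M k p = rev_t k (thr M p).
Proof.
  intros hp. destruct (price_threshold p hp) as [ht0 hpt].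
  rewrite hpt at 1. apply Rev_pow, ht0.
Qed.

Lemma Apeak_on_prices k p : 0 < p < pmax M -> Apeak M k p = peak_t k (thr M p).
Proof.
  intros hp. destruct (price_threshold p hp) as [ht0 hpt].
  rewrite hpt at 1. apply Apeak_pow, ht0.
Qed.

Lemma price_chain_rule (F f : R -> R) p df :
  (forall y, 0 < y < pmax M -> F y = f (thr M y)) -> 0 < p < pmax M ->
  derivable_pt_lim f (thr M p) df -> derivable_pt_lim F p (df * dthr p).
Proof.
  intros hF0 hp hdf.
  apply derivable_pt_lim_local with (g := fun y => f (thr M y)) (r := Rmin p (pmax M - p)).
  - apply Rmin_pos; lra.
  - intros y hy. apply Rabs_def2 in hy.
    pose proof (Rmin_l p (pmax M - p)). pose proof (Rmin_r p (pmax M - p)).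
    apply hF0. lra.
  - apply (derivable_pt_lim_comp (thr M) f p (dthr p) df); [| exact hdf].
    unfold thr, dthr. apply derivable_pt_lim_rpow. lra.
Qed.

Lemma Rev_price_deriv k p : 0 < p < pmax M -> derivable_pt_lim (Rev M k) p
  (scale * eta M * Rpower (thr M p) (1 - sigma M) * (k - kcrit (thr M p)) * dthr p).
Proof.
  intros hp. apply price_chain_rule with (f := rev_t k); [apply Rev_on_prices | exact hp |].
  apply rev_t_deriv, thr_pos. lra.
Qed.

Lemma Apeak_price_deriv k p : 0 < p < pmax M -> derivable_pt_lim (Apeak M k) p
  (- k * scale * Rpower (thr M p) (1 - sigma M) * dthr p).
Proof.
  intros hp. apply price_chain_rule with (f := peak_t k); [apply Apeak_on_prices | exact hp |].
  apply peak_t_deriv, thr_pos. lra.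
Qed.

Lemma Rev_price_deriv_sign k p d : 0 < p < pmax M -> derivable_pt_lim (Rev M k) p d ->
  exists P, 0 < P /\ d = P * (k - kcrit (thr M p)).
Proof.
  intros hp hd. rewrite (uniqueness_limite _ _ _ _ hd (Rev_price_deriv k p hp)).
  pose proof scale_pos. pose proof (dthr_pos p). pose proof (Rpower_pos (thr M p) (1 - sigma M)).
  exists (scale * eta M * Rpower (thr M p) (1 - sigma M) * dthr p). split; [| ring].
  apply Rmult_lt_0_compat; [apply Rmult_lt_0_compat; [apply Rmult_lt_0_compat |] |]; lra.
Qed.

Lemma feasible_threshold k kp q : 0 < k -> feasible M k kp q ->
  0 < q < pmax M /\ 0 < thr M q < Phimax M /\ q = Rpower (thr M q) (theta M) /\
  0 < rev_t k (thr M q) /\ peak_t kp (thr M q) <= C3g M.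
Proof.
  intros hk [hq0 [hR hA]].
  assert (hq : 0 < q < pmax M).
  { split.
    - destruct hq0 as [| <-]; auto. pose proof (Rev_at_zero k ltac:(lra)). lra.
    - destruct (Rlt_dec q (pmax M)) as [| hn]; auto.
      unfold Rev in hR. destruct (Rlt_dec q (pmax M)); [contradiction | lra]. }
  destruct (price_threshold q hq) as [ht0 hqt].
  rewrite Rev_on_prices in hR by exact hq. rewrite Apeak_on_prices in hA by exact hq.
  repeat split; auto; lra.
Qed.

Lemma threshold_feasible k kp t : 0 < t < Phimax M -> 0 < rev_t k t -> peak_t kp t <= C3g M ->
  feasible M k kp (Rpower t (theta M)).
Proof.
  intros hti hR hA. pose proof (Rpower_pos t (theta M)).
  split; [lra |]. rewrite Rev_pow, Apeak_pow by exact hti. split; assumption.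
Qed.

Lemma eq_price_of_threshold k kp t1 : 0 < k -> 0 < t1 < Phimax M ->
  0 < rev_t k t1 -> peak_t kp t1 <= C3g M ->
  (forall t, 0 < t < Phimax M -> t <> t1 -> 0 < rev_t k t -> peak_t kp t <= C3g M ->
     rev_t k t < rev_t k t1) ->
  (forall q, is_eq_price M k kp q <-> q = Rpower t1 (theta M)) /\
  pstar M k kp = Rpower t1 (theta M).
Proof.
  intros hk ht1 hR hA hbest. apply unique_eq_price; [apply threshold_feasible; auto |].
  intros q hq hne. destruct (feasible_threshold k kp q hk hq) as [hqp [htq [hqt [hRq hAq]]]].
  rewrite Rev_pow by exact ht1. rewrite hqt, Rev_pow by exact htq.
  apply hbest; auto. intros heq. apply hne. rewrite hqt, heq. reflexivity.
Qed.

(* Opt-saturated equilibrium: the capacity binds at [t1] and revenue decreases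
   beyond [t1]. *)
Lemma eq_price_saturated k kp t1 : 0 < k -> 0 < kp -> 0 < t1 < Phimax M ->
  peak_t kp t1 = C3g M -> 0 < rev_t k t1 -> k <= kcrit t1 -> k < kcrit (Phimax M) ->
  (forall q, is_eq_price M k kp q <-> q = Rpower t1 (theta M)) /\
  pstar M k kp = Rpower t1 (theta M).
Proof.
  intros hk hkp ht1 hA hR hc hcP. apply eq_price_of_threshold; auto; [lra |].
  intros t ht hne _ hAt. destruct (Rtotal_order t t1) as [hl | [heq | hg]]; [| contradiction |].
  - pose proof (peak_t_decreasing kp t t1 hkp ltac:(lra)). lra.
  - apply rev_t_decreasing; try lra.
    intros c hc'. apply (kcrit_stays_above k t1 c); lra.
Qed.

Lemma eq_price_unsaturated k kp t1 : 0 < k -> 0 < t1 < Phimax M -> t1 <= t_peak ->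
  kcrit t1 = k -> k < kcrit (Phimax M) -> 0 < rev_t k t1 -> peak_t kp t1 <= C3g M ->
  (forall q, is_eq_price M k kp q <-> q = Rpower t1 (theta M)) /\
  pstar M k kp = Rpower t1 (theta M).
Proof.
  intros hk ht1 htp hc hcP hR hA. apply eq_price_of_threshold; auto.
  intros t ht hne _ _. destruct (Rtotal_order t t1) as [hl | [heq | hg]]; [| contradiction |].
  - apply rev_t_increasing; try lra.
    intros c hc'. rewrite <- hc. apply kcrit_increasing; lra.
  - apply rev_t_decreasing; try lra.
    intros c hc'. apply (kcrit_stays_above k t1 c); lra.
Qed.

(* Feasible prices stay away from [0]: positive revenue at a threshold
   [t <= Phimax/2] forces [q Zc > eta k tail_traffic (Phimax/2)]. *)
Lemma feasible_lower_bound k kp : 0 < k ->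
  exists e, 0 < e /\ forall q, feasible M k kp q -> e <= q.
Proof.
  intros hk. set (t2 := Phimax M / 2). pose proof Zc_pos. pose proof scale_pos.
  pose proof (tail_traffic_pos t2 ltac:(unfold t2; lra)).
  exists (Rmin (eta M * k * tail_traffic t2 / Zc M) (Rpower t2 (theta M))). split.
  { apply Rmin_pos; [| apply Rpower_pos].
    apply Rdiv_lt_0_compat; [apply Rmult_lt_0_compat; [apply Rmult_lt_0_compat |] |]; lra. }
  intros q hq. destruct (feasible_threshold k kp q hk hq) as [_ [htq [hqt [hR _]]]].
  rewrite hqt. set (t := thr M q) in *.
  destruct (Rle_dec t t2) as [hle | hgt].
  - apply Rle_trans with (1 := Rmin_l _ _).
    assert (hF2 : tail_traffic t2 <= tail_traffic t)
      by (destruct hle as [hl | heq]; [left; apply tail_traffic_decreasing; lra | rewrite heq; lra]).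
    assert (hF1 : tail_users t <= Zc M).
    { rewrite Zc_eq. unfold tail_users, Rdiv. apply Rmult_le_compat_r.
      - left; apply Rinv_0_lt_compat; lra.
      - pose proof (Rpower_pos t (1 - sigma M)). lra. }
    assert (hpos : eta M * k * tail_traffic t < Rpower t (theta M) * tail_users t).
    { unfold rev_t in hR. apply Rmult_lt_reg_l with scale; lra. }
    pose proof (Rpower_pos t (theta M)).
    assert (eta M * k * tail_traffic t2 <= eta M * k * tail_traffic t)
      by (apply Rmult_le_compat_l; [left; apply Rmult_lt_0_compat |]; lra).
    assert (Rpower t (theta M) * tail_users t <= Rpower t (theta M) * Zc M)
      by (apply Rmult_le_compat_l; lra).
    left. apply Rmult_lt_reg_r with (Zc M); [lra |].
    unfold Rdiv. rewrite Rmult_assoc, Rinv_l by lra. lra.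
  - apply Rle_trans with (1 := Rmin_r _ _). left. apply pow_lt; unfold t2 in *; lra.
Qed.

Lemma inf_range k kp p0 : 0 < k -> is_inf (feasible M k kp) p0 -> 0 < p0 < pmax M.
Proof.
  intros hk hi. destruct (feasible_lower_bound k kp hk) as [e [he hb]].
  pose proof (proj2 hi e hb).
  destruct (is_inf_approx _ p0 hi 1 ltac:(lra)) as [q [hq hq1]].
  pose proof (proj1 hi q hq). destruct (feasible_threshold k kp q hk hq) as [hqp _]. lra.
Qed.

(* The capacity constraint holds at [p0] (by continuity of [A] from the right). *)
Lemma inf_peak_le k kp p0 : 0 < k -> is_inf (feasible M k kp) p0 ->
  peak_t kp (thr M p0) <= C3g M.
Proof.
  intros hk hi. pose proof (inf_range k kp p0 hk hi) as hp.
  rewrite <- Apeak_on_prices by exact hp. apply Rnot_lt_le. intros hlt.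
  destruct (derivable_pt_lim_gt_near _ _ _ _ (Apeak_price_deriv kp p0 hp) hlt) as [del [hd h]].
  destruct (is_inf_approx _ p0 hi del hd) as [q [hq hql]].
  pose proof (proj1 hi q hq). destruct hq as [_ [_ hA]].
  specialize (h q ltac:(rewrite Rabs_right; lra)). lra.
Qed.

(* If revenue is positive at [p0], the capacity binds there: otherwise, by
   continuity of [R] and [A], slightly lower prices would still be feasible. *)
Lemma inf_saturated k kp p0 : 0 < k -> is_inf (feasible M k kp) p0 ->
  0 < Rev M k p0 -> Apeak M kp p0 = C3g M.
Proof.
  intros hk hi hR. pose proof (inf_range k kp p0 hk hi) as hp.
  pose proof (inf_peak_le k kp p0 hk hi) as hle. rewrite <- Apeak_on_prices in hle by exact hp.
  destruct hle as [hlt |]; auto. exfalso.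
  destruct (derivable_pt_lim_lt_near _ _ _ _ (Apeak_price_deriv kp p0 hp) hlt) as [d1 [hd1 h1]].
  destruct (derivable_pt_lim_gt_near _ _ _ _ (Rev_price_deriv k p0 hp) hR) as [d2 [hd2 h2]].
  pose proof (Rmin_l d1 d2). pose proof (Rmin_r d1 d2).
  pose proof (Rmin_l (Rmin d1 d2) p0). pose proof (Rmin_r (Rmin d1 d2) p0).
  set (e := Rmin (Rmin d1 d2) p0 / 2).
  assert (he : 0 < e) by (unfold e; assert (0 < Rmin (Rmin d1 d2) p0)
    by (apply Rmin_pos; [apply Rmin_pos |]; lra); lra).
  assert (hdist : Rabs (p0 - e - p0) = e) by (rewrite Rabs_left; lra).
  assert (hfe : feasible M k kp (p0 - e)).
  { split; [unfold e in *; lra |].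
    split; [apply h2 | left; apply h1]; rewrite hdist; unfold e; lra. }
  pose proof (proj1 hi _ hfe). lra.
Qed.

Lemma saturated_regime ka kp : 0 < ka -> 0 < kp -> ka < kcrit (Phimax M) ->
  Rprime_at_p0 M ka kp (fun d => d < 0) ->
  exists t0, 0 < t0 < Phimax M /\ peak_t kp t0 = C3g M /\ 0 < rev_t ka t0 /\ ka < kcrit t0.
Proof.
  intros hka hkp hcP [p0 [d [hi [hd hneg]]]]. cbv beta in hneg.
  pose proof (inf_range ka kp p0 hka hi) as hp.
  destruct (Rev_price_deriv_sign ka p0 d hp hd) as [P [hP hdP]].
  destruct (price_threshold p0 hp) as [ht0 hp0]. set (t0 := thr M p0) in *.
  assert (hc : ka < kcrit t0) by nra.
  (* Any feasible price is [>= p0], and revenue only drops above [t0]. *)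
  assert (hR : 0 < rev_t ka t0).
  { destruct (is_inf_approx _ p0 hi 1 ltac:(lra)) as [q [hq _]].
    pose proof (proj1 hi q hq) as hpq.
    destruct (feasible_threshold ka kp q hka hq) as [hqp [htq [_ [hRq _]]]].
    destruct (Rle_lt_or_eq_dec p0 q hpq) as [hlt | <-]; [| exact hRq].
    assert (t0 < thr M q) by (apply thr_lt; lra).
    assert (rev_t ka (thr M q) < rev_t ka t0); [| lra].
    apply rev_t_decreasing; try lra. intros c hc'. apply (kcrit_stays_above ka t0 c); lra. }
  exists t0. repeat split; try lra.
  assert (hRp : 0 < Rev M ka p0) by (rewrite Rev_on_prices by exact hp; exact hR).
  pose proof (inf_saturated ka kp p0 hka hi hRp) as hA.
  rewrite Apeak_on_prices in hA by exact hp. exact hA.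
Qed.

Lemma unsaturated_regime ka kp : 0 < ka -> Rprime_at_p0 M ka kp (fun d => 0 < d) ->
  exists t0, 0 < t0 < Phimax M /\ peak_t kp t0 <= C3g M /\ kcrit t0 < ka /\
    forall t1, t0 < t1 < Phimax M -> (forall c, t0 < c < t1 -> kcrit c < ka) -> 0 < rev_t ka t1.
Proof.
  intros hka [p0 [d [hi [hd hpos]]]]. cbv beta in hpos.
  pose proof (inf_range ka kp p0 hka hi) as hp.
  destruct (Rev_price_deriv_sign ka p0 d hp hd) as [P [hP hdP]].
  destruct (price_threshold p0 hp) as [ht0 hp0]. set (t0 := thr M p0) in *.
  exists t0. split; [exact ht0 |]. split; [apply (inf_peak_le ka kp p0 hka hi) |]. split; [nra |].
  intros t1 ht1 hc.
  assert (hlt : p0 < Rpower t1 (theta M)) by (rewrite hp0; apply pow_lt; lra).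
  destruct (is_inf_approx _ p0 hi (Rpower t1 (theta M) - p0) ltac:(lra)) as [q [hq hql]].
  pose proof (proj1 hi q hq) as hpq.
  destruct (feasible_threshold ka kp q hka hq) as [hqp [htq [_ [hRq _]]]].
  assert (htq0 : t0 <= thr M q).
  { destruct (Rle_lt_or_eq_dec p0 q hpq) as [hl | <-]; [left; apply thr_lt; lra | right; reflexivity]. }
  assert (htq1 : thr M q < t1).
  { rewrite <- (thr_of_pow t1) by lra. apply thr_lt; lra. }
  assert (rev_t ka (thr M q) < rev_t ka t1); [| lra].
  apply rev_t_increasing; try lra. intros c hc'. apply hc. lra.
Qed.

(** If, near a parameter
    value [k0], the equilibrium price is [g(k)^theta] for a threshold [g]
    increasing at [k0], and revenue along the path decreases, then the price
    rises, net utilities, surplus and welfare fall, and revenue falls.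
    [K] selects which [kappa_avg] the revenue is evaluated at. *)
Lemma comparative_statics (K P g : R -> R) k0 del dg dr :
  0 < del ->
  (forall k, Rabs (k - k0) < del -> 0 < g k < Phimax M /\ P k = Rpower (g k) (theta M)) ->
  derivable_pt_lim g k0 dg -> 0 < dg ->
  derivable_pt_lim (fun k => rev_t (K k) (g k)) k0 dr -> dr < 0 ->
  (exists dp, 0 < dp /\ derivable_pt_lim P k0 dp /\
     (forall Phi, derivable_pt_lim (fun k => net_utility M Phi (P k)) k0 (- dp))) /\
  (exists dr, dr < 0 /\ derivable_pt_lim (fun k => Rev M (K k) (P k)) k0 dr) /\
  (exists du, du < 0 /\ derivable_pt_lim (fun k => surplus M (P k)) k0 du) /\
  (exists dw, dw < 0 /\ derivable_pt_lim (fun k => welfare M (K k) (P k)) k0 dw).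
Proof.
  intros hdel hloc hg hdg hr hdr.
  destruct (hloc k0 ltac:(rewrite Rminus_eq_0, Rabs_R0; exact hdel)) as [ht0 _].
  pose proof (Rpower_pos (g k0) (theta M - 1)).
  set (dp := theta M * Rpower (g k0) (theta M - 1) * dg).
  set (du := - scale * theta M * Rpower (g k0) (theta M - 1) * tail_users (g k0) * dg).
  assert (hdp : 0 < dp) by (apply Rmult_lt_0_compat; [apply Rmult_lt_0_compat |]; lra).
  assert (hdu : du < 0).
  { pose proof scale_pos. pose proof (tail_users_pos (g k0) ht0).
    assert (0 < scale * theta M * Rpower (g k0) (theta M - 1) * tail_users (g k0) * dg)
      by (repeat (apply Rmult_lt_0_compat; try lra)).
    unfold du. lra. }
  assert (hP : derivable_pt_lim P k0 dp).
  { apply derivable_pt_lim_local with (g := fun k => Rpower (g k) (theta M)) (r := del); auto.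
    - intros k hk. apply hloc, hk.
    - unfold dp. apply (derivable_pt_lim_comp g (fun y => Rpower y (theta M))); [exact hg |].
      apply derivable_pt_lim_power. lra. }
  assert (hR : derivable_pt_lim (fun k => Rev M (K k) (P k)) k0 dr).
  { apply derivable_pt_lim_local with (g := fun k => rev_t (K k) (g k)) (r := del); auto.
    intros k hk. destruct (hloc k hk) as [htk ->]. apply Rev_pow, htk. }
  assert (hS : derivable_pt_lim (fun k => surplus M (P k)) k0 du).
  { apply derivable_pt_lim_local with (g := fun k => surplus_t (g k)) (r := del); auto.
    - intros k hk. destruct (hloc k hk) as [htk ->]. apply surplus_pow, htk.
    - unfold du. apply (derivable_pt_lim_comp g surplus_t); [exact hg |].
      apply surplus_t_deriv. lra. }
  split; [| split; [| split]].
  - exists dp. repeat split; auto. intros Phi.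
    replace (- dp) with (0 - dp) by ring.
    apply (derivable_pt_lim_minus (fun _ => rpow Phi (theta M)) P); [apply derivable_pt_lim_const | exact hP].
  - exists dr. split; assumption.
  - exists du. split; assumption.
  - exists (du + dr). split; [lra |].
    apply (derivable_pt_lim_plus (fun k => surplus M (P k)) (fun k => Rev M (K k) (P k))); assumption.
Qed.

(** Opt-saturated regime: the saturating threshold as a function of [kappa_peak].
    [peak_t k t = C3g] is solved explicitly by [t = t_sat k]. *)

Definition sat_base k := Rpower (Phimax M) (2 - sigma M) - (2 - sigma M) * C3g M / (k * scale).
Definition t_sat k := Rpower (sat_base k) (1 / (2 - sigma M)).

Lemma sat_base_deriv k : 0 < k ->
  derivable_pt_lim sat_base k ((2 - sigma M) * C3g M / (k * k * scale)).
Proof.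
  intros hk. pose proof scale_pos. apply is_derive_Reals. unfold sat_base. auto_derive.
  - nra.
  - field. split; lra.
Qed.

Lemma t_sat_of_peak k t : 0 < k -> 0 < t -> peak_t k t = C3g M ->
  sat_base k = Rpower t (2 - sigma M) /\ t_sat k = t.
Proof.
  intros hk h0 hA. pose proof scale_pos.
  assert (e : sat_base k = Rpower t (2 - sigma M)).
  { unfold sat_base. rewrite <- hA. unfold peak_t, tail_traffic. field. split; lra. }
  split; auto. unfold t_sat. rewrite e. apply Rpower_unroot; lra.
Qed.

Lemma peak_t_sat k : 0 < k -> 0 < sat_base k -> peak_t k (t_sat k) = C3g M.
Proof.
  intros hk hX. pose proof scale_pos. unfold peak_t, tail_traffic, t_sat.
  rewrite Rpower_root by lra. unfold sat_base. field. split; lra.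
Qed.

Lemma t_sat_range k : 0 < k -> 0 < sat_base k -> 0 < t_sat k < Phimax M.
Proof.
  intros hk hX. pose proof scale_pos. split; [apply Rpower_pos |].
  rewrite <- (Rpower_unroot (Phimax M) (2 - sigma M)) by lra.
  unfold t_sat. apply Rlt_Rpower_l; [apply Rdiv_lt_0_compat; lra |]. split; [exact hX |].
  unfold sat_base. assert (0 < (2 - sigma M) * C3g M / (k * scale)); [| lra].
  apply Rdiv_lt_0_compat; apply Rmult_lt_0_compat; lra.
Qed.

Lemma t_sat_deriv k : 0 < k -> 0 < sat_base k ->
  exists d, 0 < d /\ derivable_pt_lim t_sat k d.
Proof.
  intros hk hX. pose proof scale_pos.
  eexists. split; [| apply (derivable_pt_lim_comp sat_base (fun y => Rpower y (1 / (2 - sigma M))));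
    [apply sat_base_deriv, hk | apply derivable_pt_lim_power, hX]].
  pose proof (Rpower_pos (sat_base k) (1 / (2 - sigma M) - 1)).
  apply Rmult_lt_0_compat; [apply Rmult_lt_0_compat; [apply Rdiv_lt_0_compat |] |]; try lra.
  apply Rdiv_lt_0_compat; [apply Rmult_lt_0_compat | apply Rmult_lt_0_compat; [apply Rmult_lt_0_compat |]]; lra.
Qed.

Lemma saturated_path ka kp t0 : 0 < ka -> 0 < kp -> ka < kcrit (Phimax M) ->
  0 < t0 < Phimax M -> peak_t kp t0 = C3g M -> 0 < rev_t ka t0 -> ka < kcrit t0 ->
  exists del, 0 < del /\ forall k, Rabs (k - kp) < del ->
    0 < t_sat k < Phimax M /\ pstar M ka k = Rpower (t_sat k) (theta M).
Proof.
  intros hka hkp hcP ht0 hA hR hc.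
  destruct (t_sat_of_peak kp t0 hkp ltac:(lra) hA) as [hX htC].
  pose proof (Rpower_pos t0 (2 - sigma M)) as hXp. rewrite <- hX in hXp.
  destruct (t_sat_deriv kp hkp hXp) as [dg [_ hg]].
  destruct (derivable_pt_lim_gt_near _ _ _ 0 (sat_base_deriv kp hkp) hXp) as [d1 [hd1 h1]].
  assert (hdr : derivable_pt_lim (fun k => rev_t ka (t_sat k)) kp
    (scale * eta M * Rpower t0 (1 - sigma M) * (ka - kcrit t0) * dg)).
  { apply (derivable_pt_lim_comp t_sat (rev_t ka)); [exact hg |]. rewrite htC. apply rev_t_deriv. lra. }
  assert (hdc : derivable_pt_lim (fun k => kcrit (t_sat k)) kp (dkcrit t0 * dg)).
  { apply (derivable_pt_lim_comp t_sat kcrit); [exact hg |]. rewrite htC. apply kcrit_deriv. lra. }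
  destruct (derivable_pt_lim_gt_near _ _ _ 0 hdr ltac:(cbv beta; rewrite htC; exact hR)) as [d2 [hd2 h2]].
  destruct (derivable_pt_lim_gt_near _ _ _ ka hdc ltac:(cbv beta; rewrite htC; exact hc)) as [d3 [hd3 h3]].
  exists (Rmin (Rmin d1 d2) (Rmin d3 kp)). split; [repeat apply Rmin_pos; lra |].
  intros k hk.
  pose proof (Rmin_l (Rmin d1 d2) (Rmin d3 kp)). pose proof (Rmin_r (Rmin d1 d2) (Rmin d3 kp)).
  pose proof (Rmin_l d1 d2). pose proof (Rmin_r d1 d2). pose proof (Rmin_l d3 kp). pose proof (Rmin_r d3 kp).
  assert (hk0 : 0 < k) by (apply Rabs_def2 in hk; lra).
  specialize (h1 k ltac:(lra)). specialize (h2 k ltac:(lra)). specialize (h3 k ltac:(lra)).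
  pose proof (t_sat_range k hk0 h1) as hrange. split; [exact hrange |].
  apply (eq_price_saturated ka k (t_sat k)); auto; [apply peak_t_sat | left]; auto.
Qed.

(** Opt-unsaturated regime: the revenue-maximising threshold as a function of
    [kappa_avg] is the inverse of the increasing branch of [kcrit]. *)

Definition t_end := Rmin t_peak (Phimax M).
Definition t_opt k := epsilon (inhabits 0) (fun t => 0 < t <= t_end /\ kcrit t = k).

Lemma t_end_pos : 0 < t_end.
Proof. pose proof t_peak_pos. unfold t_end. apply Rmin_pos; lra. Qed.

Lemma t_end_le : t_end <= t_peak /\ t_end <= Phimax M.
Proof. split; [apply Rmin_l | apply Rmin_r]. Qed.

Lemma kcrit_injective s s' : 0 < s <= t_end -> 0 < s' <= t_end -> kcrit s = kcrit s' -> s = s'.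
Proof.
  intros h1 h2 heq. pose proof t_end_le.
  destruct (Rtotal_order s s') as [h | [h | h]]; auto.
  - pose proof (kcrit_increasing s s' ltac:(lra) h ltac:(lra)). lra.
  - pose proof (kcrit_increasing s' s ltac:(lra) h ltac:(lra)). lra.
Qed.

Lemma kcrit_continuity x : 0 < x -> continuity_pt kcrit x.
Proof. intros hx. apply derivable_continuous_pt. exists (dkcrit x). apply kcrit_deriv, hx. Qed.

Lemma t_opt_spec t0 y : 0 < t0 < t_end -> kcrit t0 <= y <= kcrit t_end ->
  0 < t_opt y <= t_end /\ kcrit (t_opt y) = y /\ t0 <= t_opt y.
Proof.
  intros ht0 hy. pose proof t_end_le.
  destruct (f_interv_is_interv kcrit t0 t_end y ltac:(lra) hy) as [x [hx hxe]].
  { intros a ha. apply kcrit_continuity. lra. }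
  assert (hs : 0 < t_opt y <= t_end /\ kcrit (t_opt y) = y).
  { unfold t_opt. apply epsilon_spec. exists x. split; [split |]; lra. }
  split; [tauto | split; [tauto |]]. apply Rnot_lt_le. intros hlt.
  pose proof (kcrit_increasing (t_opt y) t0 ltac:(lra) hlt ltac:(lra)). lra.
Qed.

Lemma t_opt_kcrit s : 0 < s <= t_end -> t_opt (kcrit s) = s.
Proof.
  intros hs. assert (h : 0 < t_opt (kcrit s) <= t_end /\ kcrit (t_opt (kcrit s)) = kcrit s).
  { unfold t_opt. apply epsilon_spec. exists s. split; auto. }
  apply kcrit_injective; tauto.
Qed.

Lemma t_opt_deriv t0 k : 0 < t0 < t_end -> kcrit t0 < k < kcrit t_end ->
  derivable_pt_lim t_opt k (1 / dkcrit (t_opt k)).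
Proof.
  intros ht0 hk. pose proof t_end_le. pose proof t_end_pos.
  assert (hcont : continuity_pt t_opt k).
  { apply (continuity_pt_recip_interv kcrit t_opt t0 t_end); try lra.
    - intros x y hx hxy hy. apply kcrit_increasing; lra.
    - intros x h1 h2. apply (t_opt_spec t0 x ht0). lra.
    - intros x h1 h2. destruct (t_opt_spec t0 x ht0 ltac:(lra)) as [[_ a] [_ b]]. lra.
    - intros a ha. apply kcrit_continuity. lra. }
  assert (hT0 : t_opt (kcrit t0) = t0) by (apply t_opt_kcrit; lra).
  assert (hT1 : t_opt (kcrit t_end) = t_end) by (apply t_opt_kcrit; lra).
  assert (Prf : forall a, t_opt (kcrit t0) <= a <= t_opt (kcrit t_end) -> derivable_pt kcrit a).
  { intros a ha. exists (dkcrit a). apply kcrit_deriv. lra. }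
  destruct (t_opt_spec t0 k ht0 ltac:(lra)) as [hTk [hck hTk0]].
  assert (hne : t_opt k <> t_end) by (intros heq; rewrite heq in hck; lra).
  assert (hmid : t_opt (kcrit t0) <= t_opt k <= t_opt (kcrit t_end)) by lra.
  pose proof (derivable_pt_lim_recip_interv kcrit t_opt (kcrit t0) (kcrit t_end) k Prf hcont
     ltac:(lra) ltac:(lra) hmid) as hd.
  rewrite (derive_pt_eq_0 kcrit (t_opt k) (dkcrit (t_opt k)) (Prf (t_opt k) hmid)) in hd
    by (apply kcrit_deriv; lra).
  apply hd.
  - intros x hx. apply (t_opt_spec t0 x ht0). lra.
  - pose proof (dkcrit_pos (t_opt k) ltac:(lra) ltac:(lra)). lra.
Qed.

Lemma rev_t_argmax k s t : 0 < s <= t_peak -> s < Phimax M -> kcrit s = k ->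
  k < kcrit (Phimax M) -> 0 < t < Phimax M -> rev_t k t <= rev_t k s.
Proof.
  intros hs hsP hc hcP ht. destruct (Rtotal_order t s) as [hl | [-> | hg]].
  - left. apply rev_t_increasing; try lra. intros c hc'. rewrite <- hc. apply kcrit_increasing; lra.
  - lra.
  - left. apply rev_t_decreasing; try lra. intros c hc'. apply (kcrit_stays_above k s c); lra.
Qed.

(* Envelope theorem: along the optimal thresholds, revenue changes in
   [kappa_avg] only through the direct cost term. *)
Lemma rev_t_envelope g k0 dg : 0 < g k0 -> kcrit (g k0) = k0 -> derivable_pt_lim g k0 dg ->
  derivable_pt_lim (fun k => rev_t k (g k)) k0 (- (scale * eta M * tail_traffic (g k0))).
Proof.
  intros hg0 hc hg.
  apply derivable_pt_lim_local with (r := 1)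
    (g := fun k => rev_t k0 (g k) - scale * eta M * ((k - k0) * tail_traffic (g k))); [lra | |].
  { intros k _. unfold rev_t. ring. }
  replace (- (scale * eta M * tail_traffic (g k0))) with
    (scale * eta M * Rpower (g k0) (1 - sigma M) * (k0 - kcrit (g k0)) * dg
     - scale * eta M * (1 * tail_traffic (g k0) + (k0 - k0) * (- Rpower (g k0) (1 - sigma M) * dg)))
    by (rewrite hc; ring).
  apply (derivable_pt_lim_minus (fun k => rev_t k0 (g k))).
  - apply (derivable_pt_lim_comp g (rev_t k0)); [exact hg | apply rev_t_deriv, hg0].
  - apply (derivable_pt_lim_scal (fun k => (k - k0) * tail_traffic (g k))).
    apply (derivable_pt_lim_mult (fun k => k - k0) (fun k => tail_traffic (g k))).
    + replace 1 with (1 - 0) by ring.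
      apply (derivable_pt_lim_minus id (fun _ => k0)); [apply derivable_pt_lim_id | apply derivable_pt_lim_const].
    + apply (derivable_pt_lim_comp g tail_traffic); [exact hg | apply tail_traffic_deriv, hg0].
Qed.

Lemma rev_t_deriv_k k t : derivable_pt_lim (fun k' => rev_t k' t) k (- (scale * eta M * tail_traffic t)).
Proof. apply is_derive_Reals. unfold rev_t. auto_derive; [exact I | ring]. Qed.

Lemma unsaturated_window t0 ka : 0 < t0 < Phimax M -> kcrit t0 < ka -> ka < kcrit (Phimax M) ->
  t0 < t_end /\ ka < kcrit t_end.
Proof.
  intros ht0 hc hcP. pose proof t_peak_pos.
  assert (htp : t0 < t_peak).
  { apply Rnot_le_lt. intros hle. pose proof (kcrit_decreasing t0 (Phimax M) hle ltac:(lra)). lra. }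
  split; [unfold t_end; apply Rmin_glb_lt; lra |].
  unfold t_end. destruct (Rle_lt_dec t_peak (Phimax M)) as [[hl | he'] | hg].
  - rewrite Rmin_left by lra. pose proof (kcrit_decreasing t_peak (Phimax M) ltac:(lra) hl). lra.
  - rewrite Rmin_left, he' by lra. exact hcP.
  - rewrite Rmin_right by lra. exact hcP.
Qed.

Lemma unsaturated_optimum t0 ka : 0 < t0 < t_end -> kcrit t0 < ka < kcrit t_end ->
  t0 < t_opt ka < t_end /\ kcrit (t_opt ka) = ka.
Proof.
  intros ht0 hk. destruct (t_opt_spec t0 ka ht0 ltac:(lra)) as [hT [hc hT0]].
  split; [| exact hc]. split.
  - destruct hT0 as [| heq]; auto. rewrite <- heq in hc. lra.
  - destruct hT as [_ [| heq]]; auto. rewrite heq in hc. lra.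
Qed.

Lemma unsaturated_path ka kp t0 : 0 < ka -> 0 < kp -> ka < kcrit (Phimax M) ->
  0 < t0 < t_end -> peak_t kp t0 <= C3g M -> kcrit t0 < ka < kcrit t_end ->
  0 < rev_t ka (t_opt ka) ->
  exists del, 0 < del /\ forall k, Rabs (k - ka) < del ->
    0 < t_opt k < Phimax M /\ pstar M k kp = Rpower (t_opt k) (theta M).
Proof.
  intros hka hkp hcP ht0 hA hk hR. pose proof t_end_le.
  destruct (unsaturated_optimum t0 ka ht0 hk) as [hts hcts].
  destruct (derivable_pt_lim_gt_near _ _ _ 0 (rev_t_deriv_k ka (t_opt ka)) hR) as [d1 [hd1 h1]].
  pose proof (Rmin_l (ka - kcrit t0) (kcrit t_end - ka)). pose proof (Rmin_r (ka - kcrit t0) (kcrit t_end - ka)).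
  pose proof (Rmin_l (kcrit (Phimax M) - ka) ka). pose proof (Rmin_r (kcrit (Phimax M) - ka) ka).
  set (a := Rmin (ka - kcrit t0) (kcrit t_end - ka)) in *.
  set (b := Rmin (kcrit (Phimax M) - ka) ka) in *.
  pose proof (Rmin_l a b). pose proof (Rmin_r a b). set (d0 := Rmin a b) in *.
  assert (hd0 : 0 < d0) by (unfold d0, a, b; repeat apply Rmin_pos; lra).
  exists (Rmin d0 d1). split; [apply Rmin_pos; lra |]. intros k hk'.
  pose proof (Rmin_l d0 d1). pose proof (Rmin_r d0 d1).
  specialize (h1 k ltac:(lra)). cbv beta in h1. apply Rabs_def2 in hk'.
  destruct (t_opt_spec t0 k ht0 ltac:(lra)) as [hT [hc hT0]].
  assert (hTe : t_opt k < t_end) by (destruct hT as [_ [| heq]]; auto; rewrite heq in hc; lra).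
  split; [lra |].
  apply (eq_price_unsaturated k kp (t_opt k)); try lra.
  - pose proof (rev_t_argmax k (t_opt k) (t_opt ka) ltac:(lra) ltac:(lra) hc ltac:(lra) ltac:(lra)). lra.
  - destruct hT0 as [hl | heq]; [| rewrite <- heq; exact hA].
    pose proof (peak_t_decreasing kp t0 (t_opt k) hkp ltac:(lra)). lra.
Qed.

Lemma opt_saturated ka kp : 0 < ka -> 0 < kp -> ka < kcrit (Phimax M) ->
  Rprime_at_p0 M ka kp (fun d => d < 0) ->
  (forall p, is_eq_price M ka kp p <-> p = pstar M ka kp) /\
  Apeak M kp (pstar M ka kp) = C3g M /\
  (exists dp, 0 < dp /\
     derivable_pt_lim (fun k => pstar M ka k) kp dp /\
     (forall Phi, derivable_pt_lim (fun k => net_utility M Phi (pstar M ka k)) kp (- dp))) /\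
  (exists dr, dr < 0 /\ derivable_pt_lim (fun k => Rev M ka (pstar M ka k)) kp dr) /\
  (exists du, du < 0 /\ derivable_pt_lim (fun k => surplus M (pstar M ka k)) kp du) /\
  (exists dw, dw < 0 /\ derivable_pt_lim (fun k => welfare M ka (pstar M ka k)) kp dw).
Proof.
  intros hka hkp hcP hR0.
  destruct (saturated_regime ka kp hka hkp hcP hR0) as [t0 [ht0 [hA [hR hc]]]].
  destruct (eq_price_saturated ka kp t0 hka hkp ht0 hA hR (Rlt_le _ _ hc) hcP) as [hiff hps].
  destruct (saturated_path ka kp t0 hka hkp hcP ht0 hA hR hc) as [del [hdel hloc]].
  destruct (t_sat_of_peak kp t0 hkp ltac:(lra) hA) as [hX htC].
  destruct (t_sat_deriv kp hkp ltac:(rewrite hX; apply Rpower_pos)) as [dg [hdg hg]].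
  split; [intros p; rewrite hiff, hps; tauto |].
  split; [rewrite hps, Apeak_pow; assumption |].
  apply (comparative_statics (fun _ => ka) (pstar M ka) t_sat kp del dg
    (scale * eta M * Rpower t0 (1 - sigma M) * (ka - kcrit t0) * dg)); auto.
  - apply (derivable_pt_lim_comp t_sat (rev_t ka)); [exact hg |]. rewrite htC. apply rev_t_deriv. lra.
  - pose proof scale_pos. pose proof (Rpower_pos t0 (1 - sigma M)).
    assert (0 < scale * eta M * Rpower t0 (1 - sigma M) * (kcrit t0 - ka) * dg)
      by (repeat (apply Rmult_lt_0_compat; try lra)).
    lra.
Qed.

(* Part (ii): the opt-unsaturated case, varying [kappa_avg]; revenue falls by
   the envelope theorem since the equilibrium threshold is an interior optimum. *)
Lemma opt_unsaturated ka kp : 0 < ka -> 0 < kp -> ka < kcrit (Phimax M) ->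
  Rprime_at_p0 M ka kp (fun d => 0 < d) ->
  (forall p, is_eq_price M ka kp p <-> p = pstar M ka kp) /\
  Apeak M kp (pstar M ka kp) <> C3g M /\
  (exists dp, 0 < dp /\
     derivable_pt_lim (fun k => pstar M k kp) ka dp /\
     (forall Phi, derivable_pt_lim (fun k => net_utility M Phi (pstar M k kp)) ka (- dp))) /\
  (exists dr, dr < 0 /\ derivable_pt_lim (fun k => Rev M k (pstar M k kp)) ka dr) /\
  (exists du, du < 0 /\ derivable_pt_lim (fun k => surplus M (pstar M k kp)) ka du) /\
  (exists dw, dw < 0 /\ derivable_pt_lim (fun k => welfare M k (pstar M k kp)) ka dw).
Proof.
  intros hka hkp hcP hR0. pose proof t_end_le.
  destruct (unsaturated_regime ka kp hka hR0) as [t0 [ht0 [hA [hc hpos]]]].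
  destruct (unsaturated_window t0 ka ht0 hc hcP) as [hte hke].
  destruct (unsaturated_optimum t0 ka ltac:(lra) ltac:(lra)) as [hts hcts].
  set (ts := t_opt ka) in *.
  assert (hR : 0 < rev_t ka ts).
  { apply hpos; [lra |]. intros c hc'. rewrite <- hcts. apply kcrit_increasing; lra. }
  assert (hAts : peak_t kp ts < C3g M) by (pose proof (peak_t_decreasing kp t0 ts hkp ltac:(lra)); lra).
  destruct (eq_price_unsaturated ka kp ts hka ltac:(lra) ltac:(lra) hcts hcP hR ltac:(lra))
    as [hiff hps].
  destruct (unsaturated_path ka kp t0 hka hkp hcP ltac:(lra) hA ltac:(lra) hR) as [del [hdel hloc]].
  pose proof (t_opt_deriv t0 ka ltac:(lra) ltac:(lra)) as hg.
  split; [intros p; rewrite hiff, hps; tauto |].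
  split; [rewrite hps, Apeak_pow by lra; lra |].
  apply (comparative_statics (fun k => k) (fun k => pstar M k kp) t_opt ka del (1 / dkcrit ts)
    (- (scale * eta M * tail_traffic ts))); auto.
  - apply Rdiv_lt_0_compat; [lra | apply dkcrit_pos; lra].
  - apply rev_t_envelope with (dg := 1 / dkcrit ts); auto. exact (Rlt_trans _ _ _ (proj1 ht0) (proj1 hts)).
  - pose proof scale_pos. pose proof (tail_traffic_pos ts ltac:(lra)).
    assert (0 < scale * eta M * tail_traffic ts) by (apply Rmult_lt_0_compat; [apply Rmult_lt_0_compat |]; lra).
    lra.
Qed.

End Market.

Theorem theorem1 (M : market) (ka kp : R) :
  valid_market M ->
  0 < ka <= 1 -> 0 < kp <= 1 ->
  eta M < / (ka * rpow (Phimax M) (1 - theta M)) ->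
  (* (i) opt-saturated case: R'(p0) < 0; vary kappa_peak *)
  (Rprime_at_p0 M ka kp (fun d => d < 0) ->
     (forall p, is_eq_price M ka kp p <-> p = pstar M ka kp) /\
     Apeak M kp (pstar M ka kp) = C3g M /\
     (exists dp, 0 < dp /\
        derivable_pt_lim (fun k => pstar M ka k) kp dp /\
        (forall Phi, derivable_pt_lim (fun k => net_utility M Phi (pstar M ka k)) kp (- dp))) /\
     (exists dr, dr < 0 /\ derivable_pt_lim (fun k => Rev M ka (pstar M ka k)) kp dr) /\
     (exists du, du < 0 /\ derivable_pt_lim (fun k => surplus M (pstar M ka k)) kp du) /\
     (exists dw, dw < 0 /\ derivable_pt_lim (fun k => welfare M ka (pstar M ka k)) kp dw)) /\
  (* (ii) opt-unsaturated case: R'(p0) > 0; vary kappa_avg *)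
  (Rprime_at_p0 M ka kp (fun d => 0 < d) ->
     (forall p, is_eq_price M ka kp p <-> p = pstar M ka kp) /\
     Apeak M kp (pstar M ka kp) <> C3g M /\
     (exists dp, 0 < dp /\
        derivable_pt_lim (fun k => pstar M k kp) ka dp /\
        (forall Phi, derivable_pt_lim (fun k => net_utility M Phi (pstar M k kp)) ka (- dp))) /\
     (exists dr, dr < 0 /\ derivable_pt_lim (fun k => Rev M k (pstar M k kp)) ka dr) /\
     (exists du, du < 0 /\ derivable_pt_lim (fun k => surplus M (pstar M k kp)) ka du) /\
     (exists dw, dw < 0 /\ derivable_pt_lim (fun k => welfare M k (pstar M k kp)) ka dw)).
Proof.
  intros hv [hka _] [hkp _] heta.
  pose proof (kcrit_Phimax_gt M hv ka hka heta) as hcP.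
  split.
  - apply opt_saturated; assumption.
  - apply opt_unsaturated; assumption.
Qed.
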